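(* Let $0\le\delta,\epsilon<1$, integers $d\ge0$, $n>0$, $m>1$, let $\psi_{AB}$ be an $m$-dimensional noisy maximally entangled state, and let $P,Q\in\mathcal{H}_m^{\otimes n}$ satisfy $\|P\|'_2\le1$, $\|Q\|'_2\le1$, $\|P^{>d}\|'^2_2\le\delta$, $\|Q^{>d}\|'^2_2\le\delta$. Let $\mathcal{A}=\{\mathcal{A}_i\}$, $\mathcal{B}=\{\mathcal{B}_i\}$ be standard orthonormal bases of $\mathcal{M}_m$ with $\mathrm{Tr}((\mathcal{A}_i\otimes\mathcal{B}_j)\psi_{AB})=c_i\delta_{i,j}$ for $i,j\in\{0,\ldots,m^2-1\}$, where $c_0\ge c_1\ge\cdots\ge c_{m^2-1}\ge0$ are the singular values of the correlation matrix, and write $P=\sum_\sigma\widehat P(\sigma)\mathcal{A}_\sigma$, $Q=\sum_\sigma\widehat Q(\sigma)\mathcal{B}_\sigma$. Then there is a set $H\subseteq[n]$ with $h=|H|\le\frac{2d}{\epsilon}$ such that $\mathrm{Inf}_i(P^{\le d})\le\epsilon$ and $\mathrm{Inf}_i(Q^{\le d})\le\epsilon$ for all $i\notin H$, and $$\mathrm{Tr}((P\otimes Q)\psi_{AB}^{\otimes n})=\sum_{\sigma\in\{0,\ldots,m^2-1\}^H}c_\sigma\,\mathrm{Tr}((P_\sigma\otimes Q_\sigma)\psi_{AB}^{\otimes(n-h)}),$$ where $c_\sigma=\prod_{i\in H}c_{\sigma_i}$, $P_\sigma=\sum_{\tau:\tau_H=\sigma}\widehat P(\tau)\mathcal{A}_{\tau_{H^c}}$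 and $Q_\sigma=\sum_{\tau:\tau_H=\sigma}\widehat Q(\tau)\mathcal{B}_{\tau_{H^c}}$ (operators on the registers in $H^c=[n]\setminus H$).
   Context: A standard orthonormal basis of $\mathcal{M}_m$ is an orthonormal basis (w.r.t. $\frac1m\mathrm{Tr}X^\dagger Y$) of Hermitian matrices with $\mathcal{B}_0=\mathrm{id}_m$; for $\sigma\in\{0,\ldots,m^2-1\}^n$, $\mathcal{B}_\sigma=\bigotimes_i\mathcal{B}_{\sigma_i}$, $|\sigma|=|\{i:\sigma_i\ne0\}|$, and $\tau_H$ denotes the restriction of $\tau$ to coordinates in $H$. Such bases with diagonal correlation exist. $\|X\|'_2=(\frac1{m^n}\mathrm{Tr}X^\dagger X)^{1/2}$. For $X=\sum_\sigma\widehat X(\sigma)\mathcal{B}_\sigma$: $X^{\le d}=\sum_{|\sigma|\le d}\widehat X(\sigma)\mathcal{B}_\sigma$, $X^{>d}=\sum_{|\sigma|>d}\widehat X(\sigma)\mathcal{B}_\sigma$, and $\mathrm{Inf}_i(X)=\sum_{\sigma:\sigma_i\ne0}|\widehat X(\sigma)|^2$ (all basis-independent). A noisy maximally entangled state is a state on $\mathbb{C}^m\otimes\mathbb{C}^m$ with maximally mixed marginals and maximal correlation $\rho(\psi_{AB})=\sup\{|\mathrm{Tr}((P^\dagger\otimes Q)\psi_{AB})|:\mathrm{Tr}P=\mathrm{Tr}Q=0,\ \tfrac1m\mathrm{Tr}P^\dagger P=\tfrac1m\mathrm{Tr}Q^\dagger Q=1\}<1$. *)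

From HB Require Import structures.
From mathcomp Require Import all_boot all_order all_algebra.
From mathcomp Require Import complex.
From mathcomp Require Import boolp classical_sets reals.

Set Implicit Arguments.
Unset Strict Implicit.
Unset Printing Implicit Defensive.

Import Order.TTheory GRing.Theory Num.Theory.
Local Open Scope ring_scope.

Notation Cx R := (R[i]).
Definition toC {R : realType} (x : R) : Cx R := real_complex R x.

Definition mat (R : realType) (T : finType) := T -> T -> Cx R.

Section Ops.
Context {R : realType}.

Definition mtr {T : finType} (X : mat R T) : Cx R := \sum_(x : T) X x x.
Definition madj {T : finType} (X : mat R T) : mat R T := fun x y => conjc (X y x).
Definition mmul {T : finType} (X Y : mat R T) : mat R T :=
  fun x y => \sum_(z : T) X x z * Y z y.
Definition mid {T : finType} : mat R T := fun x y => (x == y)%:R.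
Definition is_hermitian {T : finType} (X : mat R T) : Prop :=
  forall x y, X x y = conjc (X y x).
Definition mtens {S T : finType} (X : mat R S) (Y : mat R T) : mat R (S * T)%type :=
  fun u v => X u.1 v.1 * Y u.2 v.2.
Definition is_psd {T : finType} (X : mat R T) : Prop :=
  forall v : T -> Cx R, 0 <= \sum_(u : T) \sum_(w : T) conjc (v u) * X u w * v w.
End Ops.

Section Quantum.
Context {R : realType} (m : nat).

(* computational basis of the registers indexed by I: (C^m)^{(x) I} *)
Definition idx (I : finType) := {ffun I -> 'I_m}.
Definition midx (I : finType) := {ffun I -> 'I_(m ^ 2)}.

Definition ptrB (psi : mat R ('I_m * 'I_m)%type) : mat R 'I_m :=
  fun a a' => \sum_(b : 'I_m) psi (a, b) (a', b).
Definition ptrA (psi : mat R ('I_m * 'I_m)%type) : mat R 'I_m :=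
  fun b b' => \sum_(a : 'I_m) psi (a, b) (a, b').

Definition is_state (psi : mat R ('I_m * 'I_m)%type) : Prop :=
  is_psd psi /\ mtr psi = 1.

Definition max_corr (psi : mat R ('I_m * 'I_m)%type) : R :=
  sup [set r : R | exists (P Q : mat R 'I_m),
         [/\ mtr P = 0, mtr Q = 0,
             (m%:R)^-1 * mtr (mmul (madj P) P) = 1,
             (m%:R)^-1 * mtr (mmul (madj Q) Q) = 1 &
             r = complex.Re `| mtr (mmul (mtens (madj P) Q) psi) | ] ].

Definition noisy_max_ent (psi : mat R ('I_m * 'I_m)%type) : Prop :=
  [/\ is_state psi,
      (forall a a', ptrB psi a a' = (m%:R)^-1 * mid a a'),
      (forall b b', ptrA psi b b' = (m%:R)^-1 * mid b b') &
      max_corr psi < 1].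

Definition std_onb (A : 'I_(m ^ 2) -> mat R 'I_m) : Prop :=
  [/\ (forall i : 'I_(m ^ 2), val i = 0%N -> forall a b, A i a b = mid a b),
      (forall i, is_hermitian (A i)) &
      (forall i j, (m%:R)^-1 * mtr (mmul (madj (A i)) (A j)) = (i == j)%:R)].

Definition bprod {I : finType} (A : 'I_(m ^ 2) -> mat R 'I_m) (s : midx I)
  : mat R (idx I) := fun x y => \prod_(i : I) A (s i) (x i) (y i).

Definition wt {I : finType} (s : midx I) : nat := #|[pred i | val (s i) != 0%N]|.

Definition norm2' {I : finType} (X : mat R (idx I)) : R :=
  Num.sqrt (complex.Re ((m%:R ^+ #|I|)^-1 * mtr (mmul (madj X) X))).

Definition high_part {I : finType} (A : 'I_(m ^ 2) -> mat R 'I_m)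
  (Xh : midx I -> Cx R) (d : nat) : mat R (idx I) :=
  fun x y => \sum_(s : midx I | (d < wt s)%N) Xh s * bprod A s x y.
Definition low_coef {I : finType} (Xh : midx I -> Cx R) (d : nat) :
  midx I -> Cx R := fun s => if (wt s <= d)%N then Xh s else 0.

Definition infl {I : finType} (Xh : midx I -> Cx R) (i : I) : R :=
  complex.Re (\sum_(s : midx I | val (s i) != 0%N) `|Xh s| ^+ 2).

(* Tr((P (x) Q) psi^{(x) I}), the A-registers and B-registers being grouped *)
Definition psipow {I : finType} (psi : mat R ('I_m * 'I_m)%type) :
  mat R (idx I * idx I)%type :=
  fun u v => \prod_(i : I) psi (u.1 i, u.2 i) (v.1 i, v.2 i).
Definition corr_val {I : finType} (psi : mat R ('I_m * 'I_m)%type)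
  (P Q : mat R (idx I)) : Cx R := mtr (mmul (mtens P Q) (psipow psi)).

Definition restrH {n : nat} (H : {set 'I_n}) (t : midx 'I_n) :
  midx {i : 'I_n | i \in H} := [ffun i => t (val i)].
Definition restrHc {n : nat} (H : {set 'I_n}) (t : midx 'I_n) :
  midx {i : 'I_n | i \notin H} := [ffun i => t (val i)].

Definition slice_op {n : nat} (H : {set 'I_n}) (A : 'I_(m ^ 2) -> mat R 'I_m)
  (Xh : midx 'I_n -> Cx R) (s : midx {i : 'I_n | i \in H}) :
  mat R (idx {i : 'I_n | i \notin H}) :=
  fun x y => \sum_(t : midx 'I_n | restrH H t == s) Xh t * bprod A (restrHc H t) x y.

End Quantum.

Arguments restrH m {n} H t.
Arguments restrHc m {n} H t.
Arguments slice_op {R m n} H A Xh s _ _.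

From mathcomp Require Import all_boot all_order all_algebra.
From mathcomp Require Import complex.
From mathcomp Require Import boolp reals.
From mathcomp Require Import ring lra.
Import Order.TTheory GRing.Theory Num.Theory.
Local Open Scope ring_scope.

(* Let H be the set of registers on which P^{<=d} or Q^{<=d} has influence
   above eps.  By Parseval, ||P||'_2 <= 1 means sum_s |P^(s)|^2 <= 1, so the
   total influence of P^{<=d}, namely sum_s |s| |P^(s)|^2 over |s| <= d, is at
   most d, and likewise for Q; a Markov count then gives |H| eps <= 2d.
   The decomposition holds for every H: the diagonal correlation of the two
   bases makes Tr((A_s (x) B_t) psi^{(x)n}) = [s = t] c_s, a multi-index is the
   disjoint union of its restrictions to H and H^c, and c_s = c_{s_H} c_{s_H^c}. *)

Section BigSums.
Context {K : comNzRingType}.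

Lemma sum_pair (T1 T2 : finType) (F : T1 * T2 -> K) :
  \sum_(u : T1 * T2) F u = \sum_(a : T1) \sum_(b : T2) F (a, b).
Proof. by rewrite pair_bigA; apply: eq_bigr => -[]. Qed.

Lemma exchange_big_pairs (T1 T2 T3 T4 : finType) (F : T1 -> T2 -> T3 -> T4 -> K) :
  \sum_x \sum_y \sum_z \sum_w F x y z w = \sum_z \sum_w \sum_x \sum_y F x y z w.
Proof.
transitivity (\sum_x \sum_z \sum_w \sum_y F x y z w).
  by apply: eq_bigr => x _; rewrite exchange_big; apply: eq_bigr => z _; rewrite exchange_big.
by rewrite exchange_big; apply: eq_bigr => z _; rewrite exchange_big.
Qed.

Lemma big_ffun2_prod (I J1 J2 : finType) (F : I -> J1 -> J2 -> K) :
  \sum_(f : {ffun I -> J1}) \sum_(g : {ffun I -> J2}) \prod_i F i (f i) (g i)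
  = \prod_i \sum_j1 \sum_j2 F i j1 j2.
Proof.
by rewrite bigA_distr_bigA; apply: eq_bigr => f _; rewrite bigA_distr_bigA.
Qed.

Lemma sum_diagonal (T : finType) (G : T -> T -> K) :
  (forall k l, k != l -> G k l = 0) -> \sum_k \sum_l G k l = \sum_k G k k.
Proof.
move=> G0; apply: eq_bigr => k _; rewrite (bigD1 k) //= big1 ?addr0 // => l lk.
by apply: G0; rewrite eq_sym.
Qed.

Lemma prod_kronecker (I J : finType) (f : I -> K) (s t : {ffun I -> J}) :
  \prod_i (f i * (s i == t i)%:R) = (s == t)%:R * \prod_i f i.
Proof.
have [-> | nst] := eqVneq s t.
  by rewrite mul1r; apply: eq_bigr => i _; rewrite eqxx mulr1.
have /existsP[i nsti] : [exists i, s i != t i].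
  apply: contraR nst => /existsPn st; apply/eqP/ffunP => i.
  exact/eqP/negPn/st.
by rewrite (bigD1 i) //= (negbTE nsti) mulr0 !mul0r.
Qed.

End BigSums.

Section ComplexReal.
Context {R : realType}.

Lemma Re_sum (T : finType) (F : T -> Cx R) :
  complex.Re (\sum_t F t) = \sum_t complex.Re (F t).
Proof. exact: (linear_sum (@complex.Re R : Rcomplex R -> R)). Qed.

Lemma Re_natr (k : nat) : complex.Re (k%:R : Cx R) = k%:R.
Proof. exact: (raddfMn (@complex.Re R : Rcomplex R -> R)). Qed.

Lemma ler_Re (x y : Cx R) : x <= y -> complex.Re x <= complex.Re y.
Proof. by rewrite lecE => /andP[]. Qed.

Lemma le1_sqrt_Re (v : Cx R) : 0 <= v -> Num.sqrt (complex.Re v) <= 1 -> v <= 1.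
Proof.
move=> v0; rewrite lecE (ger0_Im v0) eqxx /=.
by rewrite -[in X in X -> _]sqrtr1 ler_sqrt.
Qed.

End ComplexReal.

Section ProductBasis.
Context {R : realType} {m : nat}.
Local Notation C := (Cx R).

Definition lincomb {S T : finType} (a : S -> C) (X : S -> mat R T) : mat R T :=
  fun x y => \sum_k a k * X k x y.

Lemma corr_val_lincomb (I S1 S2 : finType) (psi : mat R ('I_m * 'I_m)%type)
    (a : S1 -> C) (X : S1 -> mat R (idx m I)) (b : S2 -> C) (Y : S2 -> mat R (idx m I)) :
  corr_val psi (lincomb a X) (lincomb b Y) =
  \sum_k \sum_l a k * b l * corr_val psi (X k) (Y l).
Proof.
rewrite /corr_val /mtr /mmul /mtens /lincomb.
under [RHS]eq_bigr do under eq_bigr do rewrite mulr_sumr.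
under [RHS]eq_bigr do under eq_bigr do under eq_bigr do rewrite mulr_sumr.
rewrite -exchange_big_pairs; apply: eq_bigr => u _; apply: eq_bigr => v _.
rewrite big_distrlr mulr_suml; apply: eq_bigr => k _.
rewrite mulr_suml; apply: eq_bigr => l _ /=; ring.
Qed.

Lemma mtr_adj_lincomb (I S1 S2 : finType)
    (a : S1 -> C) (X : S1 -> mat R (idx m I)) (b : S2 -> C) (Y : S2 -> mat R (idx m I)) :
  mtr (mmul (madj (lincomb a X)) (lincomb b Y)) =
  \sum_k \sum_l conjc (a k) * b l * mtr (mmul (madj (X k)) (Y l)).
Proof.
rewrite /mtr /mmul /madj /lincomb.
under [RHS]eq_bigr do under eq_bigr do rewrite mulr_sumr.
under [RHS]eq_bigr do under eq_bigr do under eq_bigr do rewrite mulr_sumr.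
rewrite -exchange_big_pairs; apply: eq_bigr => x _; apply: eq_bigr => z _.
rewrite (rmorph_sum (@conjc R)) big_distrlr; apply: eq_bigr => k _.
by apply: eq_bigr => l _; rewrite rmorphM /=; ring.
Qed.

Lemma corr_val_bprod (I : finType) (psi : mat R ('I_m * 'I_m)%type)
    (A B : 'I_(m ^ 2) -> mat R 'I_m) (s t : midx m I) :
  corr_val psi (bprod A s) (bprod B t) =
  \prod_i mtr (mmul (mtens (A (s i)) (B (t i))) psi).
Proof.
pose F i a b a' b' := A (s i) a a' * B (t i) b b' * psi (a', b') (a, b).
have site i : mtr (mmul (mtens (A (s i)) (B (t i))) psi) =
    \sum_a \sum_b \sum_a' \sum_b' F i a b a' b'.
  rewrite /mtr /mmul sum_pair; apply: eq_bigr => a _; apply: eq_bigr => b _.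
  exact: sum_pair.
under [RHS]eq_bigr do rewrite site.
rewrite -(big_ffun2_prod _ _ _ (fun i a b => \sum_a' \sum_b' F i a b a' b')).
rewrite /corr_val /mtr /mmul /mtens /psipow /bprod sum_pair.
apply: eq_bigr => a _; apply: eq_bigr => b _; rewrite sum_pair -big_ffun2_prod.
by apply: eq_bigr => a' _; apply: eq_bigr => b' _; rewrite -!big_split.
Qed.

Lemma mtr_adj_bprod (I : finType) (A B : 'I_(m ^ 2) -> mat R 'I_m) (s t : midx m I) :
  mtr (mmul (madj (bprod A s)) (bprod B t)) =
  \prod_i mtr (mmul (madj (A (s i))) (B (t i))).
Proof.
rewrite /mtr /mmul /madj /bprod /=.
under eq_bigr do under eq_bigr do rewrite (rmorph_prod (@conjc R)) -big_split /=.
exact: (big_ffun2_prod _ _ _ (fun i x z => conjc (A (s i) z x) * B (t i) z x)).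
Qed.

End ProductBasis.

Section Orthogonality.
Context {R : realType} {m : nat} {I : finType}.
Local Notation C := (Cx R).

Section Correlation.
Context {psi : mat R ('I_m * 'I_m)%type} {A B : 'I_(m ^ 2) -> mat R 'I_m}
  {c : 'I_(m ^ 2) -> R}.
Hypothesis hc : forall i j, mtr (mmul (mtens (A i) (B j)) psi) = toC (c i) * (i == j)%:R.

Lemma corr_val_bprod_diag (s t : midx m I) :
  corr_val psi (bprod A s) (bprod B t) = (s == t)%:R * toC (\prod_i c (s i)).
Proof.
rewrite corr_val_bprod; under eq_bigr do rewrite hc.
by rewrite prod_kronecker /toC rmorph_prod.
Qed.

Lemma corr_val_lincomb_bprod (Ph Qh : midx m I -> C) :
  corr_val psi (lincomb Ph (bprod A)) (lincomb Qh (bprod B)) =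
  \sum_s Ph s * Qh s * toC (\prod_i c (s i)).
Proof.
rewrite corr_val_lincomb sum_diagonal => [|s t st].
  by apply: eq_bigr => s _; rewrite corr_val_bprod_diag eqxx mul1r.
by rewrite corr_val_bprod_diag (negbTE st) mul0r mulr0.
Qed.

End Correlation.

Section Parseval.
Context {A : 'I_(m ^ 2) -> mat R 'I_m}.
Hypotheses (hA : std_onb A) (m_gt0 : (0 < m)%N).

Lemma mtr_adj_bprod_onb (s t : midx m I) :
  mtr (mmul (madj (bprod A s)) (bprod A t)) = (s == t)%:R * m%:R ^+ #|I|.
Proof.
have [_ _ onb] := hA.
have site i j : mtr (mmul (madj (A i)) (A j)) = m%:R * (i == j)%:R.
  by rewrite -onb mulrA mulfV ?mul1r // pnatr_eq0 -lt0n.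
by rewrite mtr_adj_bprod; under eq_bigr do rewrite site; rewrite prod_kronecker prodr_const.
Qed.

Lemma parseval (Xh : midx m I -> C) :
  (m%:R ^+ #|I|)^-1 * mtr (mmul (madj (lincomb Xh (bprod A))) (lincomb Xh (bprod A)))
  = \sum_s `|Xh s| ^+ 2.
Proof.
have mI_neq0 : (m%:R ^+ #|I| : C) != 0 by rewrite expf_neq0 // pnatr_eq0 -lt0n.
rewrite mtr_adj_lincomb sum_diagonal => [|s t st]; last first.
  by rewrite mtr_adj_bprod_onb (negbTE st) mul0r mulr0.
rewrite mulr_sumr; apply: eq_bigr => s _.
by rewrite mtr_adj_bprod_onb eqxx mul1r mulrCA mulVf // mulr1 normCK mulrC.
Qed.

Lemma sum_sqr_coef_le1 (Xh : midx m I -> C) :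
  norm2' (lincomb Xh (bprod A)) <= 1 -> \sum_s `|Xh s| ^+ 2 <= 1.
Proof.
rewrite /norm2' parseval; apply: le1_sqrt_Re.
by apply: sumr_ge0 => s _; rewrite exprn_ge0.
Qed.

End Parseval.
End Orthogonality.

Section Slices.
Context {R : realType} {m n : nat}.
Variable H : {set 'I_n}.
Local Notation C := (Cx R).
Local Notation rH := (restrH m H).
Local Notation rHc := (restrHc m H).

Lemma restr_inj {t t' : midx m 'I_n} : rH t = rH t' -> rHc t = rHc t' -> t = t'.
Proof.
move=> /ffunP eH /ffunP eHc; apply/ffunP => i.
have [iH | iHc] := boolP (i \in H).
  by have := eH (exist _ i iH); rewrite !ffunE.
by have := eHc (exist _ i iHc); rewrite !ffunE.
Qed.

Lemma prod_restr {K : comNzRingType} (F : 'I_(m ^ 2) -> K) (t : midx m 'I_n) :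
  \prod_i F (t i) = (\prod_i F (rH t i)) * \prod_i F (rHc t i).
Proof.
rewrite (bigID (mem H)) /=; congr (_ * _).
  by under [RHS]eq_bigr do rewrite ffunE; rewrite big_sub.
by under [RHS]eq_bigr do rewrite ffunE; rewrite (big_sub [pred i | i \notin H]).
Qed.

Lemma slice_op_lincomb (A : 'I_(m ^ 2) -> mat R 'I_m) (Xh : midx m 'I_n -> C) s :
  slice_op H A Xh s =
  lincomb (fun t => (rH t == s)%:R * Xh t) (fun t => bprod A (rHc t)).
Proof.
apply: funext => x; apply: funext => y; rewrite /slice_op /lincomb big_mkcond.
by apply: eq_bigr => t _; case: eqP => _; rewrite ?mul1r ?mul0r.
Qed.

Context {psi : mat R ('I_m * 'I_m)%type} {A B : 'I_(m ^ 2) -> mat R 'I_m}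
  {c : 'I_(m ^ 2) -> R}.
Hypothesis hc : forall i j, mtr (mmul (mtens (A i) (B j)) psi) = toC (c i) * (i == j)%:R.

Lemma corr_val_slice (Ph Qh : midx m 'I_n -> C) s :
  corr_val psi (slice_op H A Ph s) (slice_op H B Qh s) =
  \sum_(t | rH t == s) Ph t * Qh t * toC (\prod_i c (rHc t i)).
Proof.
rewrite !slice_op_lincomb corr_val_lincomb sum_diagonal => [|t t' tt'].
  rewrite [RHS]big_mkcond; apply: eq_bigr => t _.
  rewrite (corr_val_bprod_diag hc) eqxx mul1r.
  by case: eqP => _; rewrite ?mul1r ?mul0r ?mulr0.
rewrite (corr_val_bprod_diag hc).
case: eqP => [et|_]; last by rewrite !mul0r.
case: eqP => [et'|_]; last by rewrite mul0r mulr0 mul0r.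
case: eqP => [ec|_]; last by rewrite mul0r mulr0.
by rewrite (restr_inj (etrans et (esym et')) ec) eqxx in tt'.
Qed.

Lemma corr_val_slice_decomp (Ph Qh : midx m 'I_n -> C) :
  corr_val psi (lincomb Ph (bprod A)) (lincomb Qh (bprod B)) =
  \sum_(s : midx m {i : 'I_n | i \in H}) toC (\prod_i c (s i)) *
     corr_val psi (slice_op H A Ph s) (slice_op H B Qh s).
Proof.
rewrite (corr_val_lincomb_bprod hc) (partition_big rH xpredT) //=.
apply: eq_bigr => s _; rewrite corr_val_slice // mulr_sumr.
apply: eq_bigr => t /eqP <-.
by rewrite (prod_restr c) /toC rmorphM /=; ring.
Qed.

End Slices.

Section Influence.
Context {R : realType} {m : nat} {I : finType}.
Local Notation C := (Cx R).

Lemma infl_ge0 (Xh : midx m I -> C) i : 0 <= infl Xh i.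
Proof. by apply: (@ler_Re _ 0); apply: sumr_ge0 => s _; rewrite exprn_ge0. Qed.

Lemma sum_infl (Xh : midx m I -> C) :
  \sum_i infl Xh i = complex.Re (\sum_s (wt s)%:R * `|Xh s| ^+ 2).
Proof.
rewrite /infl -Re_sum; congr complex.Re.
under eq_bigr do rewrite big_mkcond /=.
rewrite exchange_big; apply: eq_bigr => s _.
by rewrite -big_mkcond /= sumr_const mulr_natl.
Qed.

Lemma sum_infl_low_coef_le (Xh : midx m I -> C) (d : nat) :
  \sum_s `|Xh s| ^+ 2 <= 1 -> \sum_i infl (low_coef Xh d) i <= d%:R.
Proof.
move=> mass1; rewrite sum_infl -Re_natr; apply: ler_Re.
apply: (@le_trans _ _ (\sum_s d%:R * `|Xh s| ^+ 2)).
  apply: ler_sum => s _; rewrite /low_coef; case: ifP => wt_le.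
    by rewrite ler_wpM2r ?exprn_ge0 ?ler_nat.
  by rewrite normr0 expr0n mulr0 mulr_ge0 ?exprn_ge0.
by rewrite -mulr_sumr -[leRHS]mulr1 ler_wpM2l.
Qed.

End Influence.

Lemma card_mul_le_sum {R : numDomainType} {T : finType} (f : T -> R) (D : {set T}) e :
  (forall i, 0 <= f i) -> (forall i, i \in D -> e <= f i) -> #|D|%:R * e <= \sum_i f i.
Proof.
move=> f_ge0 fD; rewrite mulr_natl -sumr_const.
apply: (@le_trans _ _ (\sum_(i in D) f i)); first exact: ler_sum.
by rewrite [leRHS](bigID (mem D)) /= lerDl sumr_ge0.
Qed.

Theorem lemma7p4 (R : realType) (delta eps : R) (d n m : nat)
  (psi : mat R ('I_m * 'I_m)%type)
  (P Q : mat R (idx m 'I_n))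
  (A B : 'I_(m ^ 2) -> mat R 'I_m) (c : 'I_(m ^ 2) -> R)
  (Ph Qh : midx m 'I_n -> Cx R) :
  0 <= delta < 1 -> 0 <= eps < 1 -> (0 < n)%N -> (1 < m)%N ->
  noisy_max_ent psi ->
  is_hermitian P -> is_hermitian Q ->
  norm2' P <= 1 -> norm2' Q <= 1 ->
  std_onb A -> std_onb B ->
  (forall i j, mtr (mmul (mtens (A i) (B j)) psi) = toC (c i) * (i == j)%:R) ->
  (forall i j : 'I_(m ^ 2), (i <= j)%N -> c j <= c i) ->
  (forall i, 0 <= c i) ->
  (forall x y, P x y = \sum_(s : midx m 'I_n) Ph s * bprod A s x y) ->
  (forall x y, Q x y = \sum_(s : midx m 'I_n) Qh s * bprod B s x y) ->
  norm2' (high_part A Ph d) ^+ 2 <= delta ->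
  norm2' (high_part B Qh d) ^+ 2 <= delta ->
  exists H : {set 'I_n},
    [/\ #|H|%:R * eps <= 2 * d%:R,
        (forall i : 'I_n, i \notin H ->
           infl (low_coef Ph d) i <= eps /\ infl (low_coef Qh d) i <= eps) &
        corr_val psi P Q =
        \sum_(s : midx m {i : 'I_n | i \in H})
           toC (\prod_(i : {i : 'I_n | i \in H}) c (s i)) *
           corr_val psi (slice_op H A Ph s) (slice_op H B Qh s)].
Proof.
move=> _ _ _ m_gt1 _ _ _ normP normQ hA hB hc _ _ eP eQ _ _.
have m_gt0 : (0 < m)%N by apply: ltnW.
have {}eP : P = lincomb Ph (bprod A) by do 2 apply: funext => ?; exact: eP.
have {}eQ : Q = lincomb Qh (bprod B) by do 2 apply: funext => ?; exact: eQ.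
subst P Q.
have sumIP := sum_infl_low_coef_le _ d (sum_sqr_coef_le1 hA m_gt0 _ normP).
have sumIQ := sum_infl_low_coef_le _ d (sum_sqr_coef_le1 hB m_gt0 _ normQ).
set IP := infl (low_coef Ph d) in sumIP *; set IQ := infl (low_coef Qh d) in sumIQ *.
exists [set i | (eps < IP i) || (eps < IQ i)]; split.
- apply: (@le_trans _ _ (\sum_i (IP i + IQ i))); last first.
    by rewrite big_split /= mulr2n mulrDl mul1r lerD.
  apply: card_mul_le_sum => [i | i]; first by rewrite addr_ge0 ?infl_ge0.
  have := infl_ge0 (low_coef Ph d) i; have := infl_ge0 (low_coef Qh d) i.
  by rewrite inE => ? ? /orP[] ?; lra.
- by move=> i; rewrite inE negb_or -!leNgt => /andP.
- exact: corr_val_slice_decomp.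
Qed.
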